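(* Let $\alpha,\beta,\gamma,x\in\mathbb{N}_0$ with $(\alpha,\beta,\gamma,x)\neq(0,0,0,0)$, let $\lambda$ be a nonnegative integer and $n$ a nonnegative integer. Then $$A^{\lambda,x}_{n+1}(\alpha,\beta,\gamma)=\gamma\, A^{\lambda,x}_n(\alpha,\beta,\gamma+\alpha)+x\lambda\beta\sum_{k=0}^{n}\binom{n}{k}A^{1,x}_{k}(\alpha,\beta,\gamma+\beta+\alpha)\,A^{\lambda,x}_{n-k}(\alpha,\beta,0).$$
   Context: For a number $t$ and $\alpha$, the generalised factorial is $(t|\alpha)_n=\prod_{j=0}^{n-1}(t-j\alpha)$ for $n\ge 1$ and $(t|\alpha)_0=1$. For parameters $\alpha,\beta,\gamma$, the generalised Stirling numbers $S(n,k,\alpha,\beta,\gamma)$ ($0\le k\le n$) are defined by the polynomial identity $(t|\alpha)_n=\sum_{k=0}^{n}S(n,k,\alpha,\beta,\gamma)\,(t-\gamma|\beta)_k$ in the variable $t$. For a nonnegative integer $\lambda$ put $\binom{k+\lambda-1}{k}=\lambda(\lambda+1)\cdots(\lambda+k-1)/k!$ (equal to $1$ for $k=0$). Define $$A^{\lambda,x}_n(\alpha,\beta,\gamma)=\sum_{k=0}^{n}\binom{k+\lambda-1}{k}(-1)^{n+k}\beta^k k!\,S(n,k,\alpha,-\beta,-\gamma)\,x^k .$$ *)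

From HB Require Import structures.
From mathcomp Require Import all_boot all_order all_algebra.
Set Implicit Arguments. Unset Strict Implicit. Unset Printing Implicit Defensive.
Import Order.TTheory GRing.Theory Num.Theory.
Local Open Scope ring_scope.

Definition gfact (a : int) (n : nat) : {poly int} :=
  \prod_(j < n) ('X - (a *+ j)%:P).

Definition gfact_shift (c b : int) (k : nat) : {poly int} :=
  \prod_(j < k) ('X - (c + b *+ j)%:P).

(* S is a family of generalised Stirling numbers iff it satisfies the defining
   polynomial identity (t|a)_n = sum_{k=0}^n S(n,k,a,b,c) (t-c|b)_k for all
   n, a, b, c.  (The coefficients are uniquely determined, since (t-c|b)_k is
   monic of degree k.) *)
Definition is_gen_stirling (S : nat -> nat -> int -> int -> int -> int) : Prop :=
  forall (n : nat) (a b c : int),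
    gfact a n = \sum_(k < n.+1) S n k a b c *: gfact_shift c b k.

(* binom(k+lam-1, k) := lam (lam+1) ... (lam+k-1) / k!  (exact division) *)
Definition rbin (lam k : nat) : nat := (\prod_(i < k) (lam + i)) %/ k`!.

Definition Apoly (S : nat -> nat -> int -> int -> int -> int)
    (lam x n alpha beta gamma : nat) : int :=
  \sum_(k < n.+1)
     (rbin lam k)%:R * (-1) ^+ (n + k) * (beta%:R) ^+ k * (k`!)%:R
       * S n k alpha%:R (- beta%:R) (- gamma%:R) * (x%:R) ^+ k.

(* Substituting t = -(beta X + gamma) in the defining identity of the
   Stirling numbers writes A^{lam,x}_n(alpha,beta,gamma) as L_lam(p_n), where
   p_n(X) = prod_{j<n} (beta X + gamma + j alpha) and L_lam is the linear
   functional on polynomials sending the falling factorial X(X-1)...(X-m+1) to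
   lam (lam+1) ... (lam+m-1) x^m.  Since p_{n+1}(X) = (beta X + gamma) p_n(X)
   with gamma shifted by alpha, the recursion follows from two properties of
   these functionals, both checked on falling factorials:
     L_lam(X f(X)) = lam x L_(lam+1)(f(X+1))   and
     L_(1+lam)(f) = (L_1 (x) L_lam)(f(X+Y)),
   the second being applied to p_n, whose value at X+Y splits by the
   Vandermonde convolution. *)

From HB Require Import structures.
From mathcomp Require Import all_boot all_order all_algebra.
From mathcomp Require Import ring.
Set Implicit Arguments. Unset Strict Implicit. Unset Printing Implicit Defensive.
Import Order.TTheory GRing.Theory Num.Theory.
Local Open Scope ring_scope.

Section Pochhammer.
Variable R : comPzRingType.
Implicit Types (d a b : R) (n : nat).

Definition poch d a n : R := \prod_(j < n) (a + d *+ j).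

Lemma poch0 d a : poch d a 0 = 1.
Proof. by rewrite /poch big_ord0. Qed.

Lemma pochS d a n : poch d a n.+1 = poch d a n * (a + d *+ n).
Proof. by rewrite /poch big_ord_recr. Qed.

Lemma pochSl d a n : poch d a n.+1 = a * poch d (a + d) n.
Proof.
rewrite /poch big_ord_recl /= mulr0n addr0; congr (_ * _).
by apply: eq_bigr => j _; rewrite mulrS addrA.
Qed.

Lemma poch_vandermonde d a b n :
  poch d (a + b) n = \sum_(k < n.+1) 'C(n, k)%:R * (poch d a k * poch d b (n - k)).
Proof.
elim: n => [|n IHn]; first by rewrite big_ord1 !poch0 bin0 !mulr1.
pose t k := 'C(n, k)%:R * (poch d a k * poch d b (n - k)).
have splitS (k : 'I_n.+1) : t k * (a + b + d *+ n) =
    'C(n, k)%:R * (poch d a k.+1 * poch d b (n - k))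
    + 'C(n, k)%:R * (poch d a k * poch d b (n - k).+1).
  have -> : d *+ n = d *+ k + d *+ (n - k) by rewrite -mulrnDr subnKC // -ltnS.
  rewrite /t !pochS; ring.
rewrite pochS IHn big_distrl (eq_bigr _ (fun k _ => splitS k)) big_split /=.
rewrite [in RHS]big_ord_recl /= bin0 subn0.
under [in RHS]eq_bigr => k _ do rewrite /bump /= add1n binS natrD mulrDl subSS.
rewrite big_split /= [RHS]addrA [RHS]addrC; congr (_ + _).
rewrite big_ord_recl big_ord_recr /= (bin_small (ltnSn n)) mul0r addr0 bin0 subn0 mul1r.
by congr (_ + _); apply: eq_bigr => k _; rewrite /bump /= add1n subnSK.
Qed.

Lemma pochMl c d a n : poch (c * d) (c * a) n = c ^+ n * poch d a n.
Proof.
elim: n => [|n IHn]; first by rewrite !poch0 mul1r.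
by rewrite !pochS IHn exprS -mulrnAr -mulrDr; ring.
Qed.

End Pochhammer.

Lemma rmorph_poch (R S : comPzRingType) (f : {rmorphism R -> S}) (d a : R) n :
  f (poch d a n) = poch (f d) (f a) n.
Proof. by rewrite rmorph_prod; apply: eq_bigr => j _; rewrite rmorphD rmorphMn. Qed.

Section Umbra.
Variable R : comNzRingType.
Implicit Types (l : nat -> R) (p q : {poly R}).

Definition umbra l p : R := \sum_(i < size p) p`_i * l i.

Lemma umbra_bound l p N : (size p <= N)%N -> umbra l p = \sum_(i < N) p`_i * l i.
Proof.
move=> leN; rewrite /umbra (big_ord_widen N (fun i => p`_i * l i) leN) big_mkcond /=.
apply: eq_bigr => i _; case: ifP => // /negbT; rewrite -leqNgt => le_p_i.
by rewrite nth_default // mul0r.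
Qed.

Lemma umbra_is_scalar l : scalar (umbra l).
Proof.
move=> c p q; pose N := maxn (size p) (size q).
have leNp : (size p <= N)%N by rewrite leq_maxl.
have leNq : (size q <= N)%N by rewrite leq_maxr.
have leN : (size (c *: p + q)%R <= N)%N.
  by rewrite (leq_trans (size_polyD _ _)) // geq_max (leq_trans (size_scale_leq _ _) leNp).
rewrite !(umbra_bound l leN, umbra_bound l leNp, umbra_bound l leNq) mulr_sumr -big_split.
by apply: eq_bigr => i _; rewrite coefD coefZ mulrDl mulrA.
Qed.

HB.instance Definition _ l :=
  GRing.isLinear.Build R {poly R} R *%R (umbra l) (umbra_is_scalar l).

Lemma map_umbraP l c (h h' : {poly {poly R}}) :
  map_poly (umbra l) (c%:P *: h + h') =
    c *: map_poly (umbra l) h + map_poly (umbra l) h'.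
Proof.
apply/polyP => i; rewrite coefD coefZ !coef_map_id0 ?raddf0 //.
by rewrite coefD coefZ mul_polyC linearP.
Qed.

Lemma umbra_map_tensor l l' p q :
  umbra l (map_poly (umbra l') (p^:P * q%:P)) = umbra l p * umbra l' q.
Proof.
have -> : map_poly (umbra l') (p^:P * q%:P) = umbra l' q *: p.
  apply/polyP => i; rewrite coef_map_id0 ?raddf0 // coefMC coef_map /=.
  by rewrite mul_polyC linearZ /= coefZ mulrC.
by rewrite linearZ /= mulrC.
Qed.

Section MonicBasis.
Variable b : nat -> {poly R}.
Hypothesis size_b : forall m, size (b m) = m.+1.
Hypothesis monic_b : forall m, b m \is monic.

Lemma basis_coef_top m : (b m)`_m = 1.
Proof. by have /eqP := monic_b m; rewrite /lead_coef size_b. Qed.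

Lemma poly_basis_span N p : (size p <= N)%N ->
  exists c : nat -> R, p = \sum_(m < N) c m *: b m.
Proof.
elim: N p => [|N IHN] p le_p_N.
  by exists (fun=> 0); rewrite big_ord0; apply/eqP; rewrite -size_poly_eq0 -leqn0.
have le_q_N : (size (p - p`_N *: b N)%R <= N)%N.
  apply/leq_sizeP => j le_N_j; rewrite coefB coefZ.
  case: (ltngtP j N) => [|lt_N_j|->]; first by rewrite ltnNge le_N_j.
    have le_bN_j : (size (b N) <= j)%N by rewrite size_b.
    by rewrite (nth_default _ (leq_trans le_p_N lt_N_j)) (nth_default _ le_bN_j) mulr0 subr0.
  by rewrite (basis_coef_top N) mulr1 subrr.
have [c def_q] := IHN _ le_q_N.
exists (fun m => if m == N then p`_N else c m).
rewrite big_ord_recr /= eqxx -[LHS](subrK (p`_N *: b N)) def_q; congr (_ + _).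
by apply: eq_bigr => i _; rewrite ifN // neq_ltn ltn_ord.
Qed.

Lemma scalar_basis_ext (f g : {poly R} -> R) : scalar f -> scalar g ->
  (forall m, f (b m) = g (b m)) -> f =1 g.
Proof.
move=> fL gL eq_fg p; have [c ->] := poly_basis_span (leqnn (size p)).
pose F : {scalar {poly R}} := HB.pack f (GRing.isLinear.Build _ _ _ _ f fL).
pose G : {scalar {poly R}} := HB.pack g (GRing.isLinear.Build _ _ _ _ g gL).
rewrite -[f _]/(F _) -[g _]/(G _) !linear_sum; apply: eq_bigr => m _.
by rewrite !linearZ /= eq_fg.
Qed.

Fixpoint basis_moments_upto (v : nat -> R) (n : nat) : nat -> R :=
  if n is n'.+1 then
    fun i => if i == n' then v n' - \sum_(j < n') (b n')`_j * basis_moments_upto v n' j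
             else basis_moments_upto v n' i
  else fun=> 0.

Definition basis_moments (v : nat -> R) (i : nat) : R := basis_moments_upto v i.+1 i.

Lemma basis_moments_uptoE v n i : (i < n)%N -> basis_moments_upto v n i = basis_moments v i.
Proof.
elim: n => [//|n IHn] lt_i_n; have [->//|ne_i_n] := eqVneq i n.
by rewrite /= (negbTE ne_i_n) IHn // ltn_neqAle ne_i_n -ltnS.
Qed.

Lemma umbra_basis_moments v m : umbra (basis_moments v) (b m) = v m.
Proof.
rewrite /umbra size_b big_ord_recr /= (basis_coef_top m) mul1r {2}/basis_moments /= eqxx.
under eq_bigr => j _ do rewrite -(basis_moments_uptoE v (ltn_ord j)).
by rewrite addrC subrK.
Qed.

End MonicBasis.

End Umbra.

Section NegativeBinomial.
Variable R : comNzRingType.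

Definition ffactp m : {poly R} := poch (-1) 'X m.

Lemma ffactp_monic m : ffactp m \is monic.
Proof.
by apply: monic_prod => j _; rewrite -polyC1 -polyCN -polyCMn monicXaddC.
Qed.

Lemma size_ffactp m : size (ffactp m) = m.+1.
Proof.
elim: m => [|m IHm]; first by rewrite /ffactp poch0 size_poly1.
rewrite /ffactp pochS -/(ffactp m) -polyC1 -polyCN -polyCMn.
rewrite size_Mmonic ?monicXaddC ?IHm ?size_XaddC ?addn2 //.
by rewrite -size_poly_gt0 IHm.
Qed.

Lemma mulX_ffactp m : 'X * ffactp m = ffactp m.+1 + m%:R *: ffactp m.
Proof. by rewrite /ffactp pochS scaler_nat mulNrn; ring. Qed.

Lemma ffactp_shift1 m : ffactp m \Po ('X + 1) = ffactp m + m%:R *: ffactp m.-1.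
Proof.
case: m => [|m]; first by rewrite /ffactp poch0 comp_polyC scale0r addr0.
rewrite /ffactp rmorph_poch rmorphN1 /= comp_polyX pochSl addrK -/(ffactp m).
by rewrite mulrDl mul1r mulX_ffactp -addrA -[m.+1]addn1 natrD scalerDl scale1r.
Qed.

Definition pochp d e c n : {poly R} := poch d%:P (e *: 'X + c%:P) n.

Lemma pochpSl d e c n : pochp d e c n.+1 = (e *: 'X + c%:P) * pochp d e (c + d) n.
Proof. by rewrite /pochp pochSl polyCD addrA. Qed.

Lemma pochp_shift1 d e c n : pochp d e c n \Po ('X + 1) = pochp d e (c + e) n.
Proof.
rewrite /pochp rmorph_poch /= comp_polyC; congr poch.
by rewrite linearD linearZ /= comp_polyX comp_polyC scalerDr alg_polyC polyCD [c%:P + _]addrC addrA.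
Qed.

Lemma pochp_addXY d e c n :
  (pochp d e c n)^:P \Po ('X + 'Y) =
    \sum_(k < n.+1) 'C(n, k)%:R * ((pochp d e c k)^:P * (pochp d e 0 (n - k))%:P).
Proof.
have split_XY : (e *: 'X + c%:P)^:P \Po ('X + 'Y) = (e *: 'X + c%:P)^:P + (e *: 'X + 0%:P)%:P.
  rewrite addr0 -!mul_polyC rmorphD rmorphM /= map_polyX !map_polyC /=.
  rewrite rmorphD rmorphM /= comp_polyX !comp_polyC polyCM; ring.
rewrite /pochp !rmorph_poch /= map_polyC comp_polyC split_XY poch_vandermonde.
by apply: eq_bigr => k _; rewrite !rmorph_poch /= map_polyC.
Qed.

Lemma ffactp_pochp m : ffactp m = pochp (-1) 1 0 m.
Proof. by rewrite /pochp scale1r addr0 polyCN polyC1. Qed.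

(* The expectation of f(N) for N negative binomial with shape a and odds x:
   its factorial moments are a (a+1) ... (a+m-1) x^m. *)
Definition negbin a x : {poly R} -> R :=
  umbra (basis_moments ffactp (fun m => poch 1 a m * x ^+ m)).

HB.instance Definition _ a x :=
  GRing.isLinear.Build R {poly R} R *%R (negbin a x) (umbra_is_scalar _).

Lemma negbin_ffactp a x m : negbin a x (ffactp m) = poch 1 a m * x ^+ m.
Proof. exact: (umbra_basis_moments size_ffactp ffactp_monic). Qed.

Lemma negbin_mulX a x p :
  negbin a x ('X * p) = a * x * negbin (a + 1) x (p \Po ('X + 1)).
Proof.
move: p; apply: (scalar_basis_ext size_ffactp ffactp_monic
  (f := fun p => negbin a x ('X * p))
  (g := fun p => a * x * negbin (a + 1) x (p \Po ('X + 1)))) => [c q r|c q r|m] /=.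
- by rewrite mulrDr -scalerAr linearP.
- by rewrite !linearP /=; ring.
rewrite mulX_ffactp ffactp_shift1 !linearD !linearZ /= !negbin_ffactp.
by case: m => [|m]; rewrite !(pochSl 1 a) ?poch0 ?exprS /=; ring.
Qed.

Lemma negbin_tensor_pochp a b x d e c n :
  negbin a x (map_poly (negbin b x) ((pochp d e c n)^:P \Po ('X + 'Y))) =
    \sum_(k < n.+1) 'C(n, k)%:R * (negbin a x (pochp d e c k) * negbin b x (pochp d e 0 (n - k))).
Proof.
rewrite pochp_addXY raddf_sum linear_sum; apply: eq_bigr => k _.
by rewrite [in LHS]mulr_natl !raddfMn /= /negbin umbra_map_tensor [RHS]mulr_natl.
Qed.

Lemma negbin_add a b x p :
  negbin (a + b) x p = negbin a x (map_poly (negbin b x) (p^:P \Po ('X + 'Y))).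
Proof.
move: p; apply: (scalar_basis_ext size_ffactp ffactp_monic (f := negbin (a + b) x)
  (g := fun p => negbin a x (map_poly (negbin b x) (p^:P \Po ('X + 'Y)))))
  => [|c q r|m] /=.
- exact: umbra_is_scalar.
- by rewrite raddfD /= map_polyZ linearP /= map_umbraP linearP.
rewrite negbin_ffactp ffactp_pochp negbin_tensor_pochp poch_vandermonde mulr_suml.
apply: eq_bigr => k _; rewrite -!ffactp_pochp !negbin_ffactp.
have -> : x ^+ m = x ^+ k * x ^+ (m - k) by rewrite -exprD subnKC // -ltnS.
ring.
Qed.

Lemma negbin_add_pochp a b x d e c n :
  negbin (a + b) x (pochp d e c n) =
    \sum_(k < n.+1) 'C(n, k)%:R * (negbin a x (pochp d e c k) * negbin b x (pochp d e 0 (n - k))).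
Proof. by rewrite negbin_add negbin_tensor_pochp. Qed.

End NegativeBinomial.

Arguments ffactp {R} m.

Lemma rbin_mul_fact lam k : (rbin lam k * k`!)%N = \prod_(i < k) (lam + i).
Proof.
rewrite /rbin; have -> : \prod_(i < k) (lam + i) = (lam + k).-1 ^_ k.
  elim: k => [|k IHk]; first by rewrite big_ord0.
  by rewrite big_ord_recr /= IHk addnS /= ffactnS mulnC.
by rewrite -bin_ffact mulnK ?fact_gt0.
Qed.

Lemma poch1_rbin (R : comPzRingType) lam k : poch 1 (lam%:R : R) k = (rbin lam k * k`!)%:R.
Proof. by rewrite rbin_mul_fact natr_prod; apply: eq_bigr => i _; rewrite natrD. Qed.

Lemma Apoly_negbin S (HS : is_gen_stirling S) (lam x n al be ga : nat) :
  Apoly S lam x n al be ga = negbin lam%:R x%:R (pochp al%:R be%:R ga%:R n).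
Proof.
pose t : {poly int} := - (be%:R *: 'X + ga%:R%:P).
have gfact_comp : gfact al%:R n \Po t = (-1) ^+ n *: pochp al%:R be%:R ga%:R n.
  rewrite rmorph_prod -mul_polyC rmorph_sign /pochp -pochMl /poch; apply: eq_bigr => j _.
  by rewrite rmorphB /= comp_polyX comp_polyC /t polyCMn -mul_polyC; ring.
have gfact_shift_comp k : gfact_shift (- ga%:R) (- be%:R) k \Po t = (- be%:R) ^+ k *: ffactp k.
  rewrite rmorph_prod -mul_polyC rmorphXn /ffactp -pochMl /poch; apply: eq_bigr => j _.
  by rewrite rmorphB /= comp_polyX comp_polyC /t polyCD !polyCN polyCMn -mul_polyC; ring.
rewrite -(signrMK n (negbin _ _ _)) -linearZ /= -gfact_comp (HS n al%:R (- be%:R) (- ga%:R)).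
rewrite !linear_sum mulr_sumr /Apoly.
apply: eq_bigr => k _; rewrite !linearZ /= gfact_shift_comp linearZ /= negbin_ffactp.
by rewrite poch1_rbin natrM exprD (exprNn (be%:R : int)); ring.
Qed.

Theorem theorem4 (S : nat -> nat -> int -> int -> int -> int)
    (HS : is_gen_stirling S)
    (alpha beta gamma x lam n : nat)
    (Hnz : (alpha, beta, gamma, x) <> (0%N, 0%N, 0%N, 0%N)) :
  Apoly S lam x n.+1 alpha beta gamma =
    gamma%:R * Apoly S lam x n alpha beta (gamma + alpha)
    + x%:R * lam%:R * beta%:R *
      \sum_(k < n.+1) ('C(n, k))%:R
         * Apoly S 1 x k alpha beta (gamma + beta + alpha)
         * Apoly S lam x (n - k) alpha beta 0.
Proof.
rewrite !(Apoly_negbin HS) pochpSl mulrDl -scalerAl mul_polyC !linearD !linearZ /= natrD.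
under eq_bigr => k _ do rewrite !(Apoly_negbin HS).
rewrite addrC negbin_mulX pochp_shift1 [lam%:R + 1]addrC negbin_add_pochp !mulr_sumr.
congr (_ + _); apply: eq_bigr => k _; rewrite !natrD addrAC; ring.
Qed.
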